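(* Let $\alpha,\beta\in\mathbb{R}$ satisfy $4<\alpha^2<6$ and $\frac{4}{100}<\beta<\frac{165}{100}$, and let $q_{\alpha,\beta}(w)=w^4+\alpha w^3+(\beta-4)w^2-\alpha w+3$ for $w\in\mathbb{C}$. Then $q_{\alpha,\beta}$ has precisely $1$ root in $\{w\in\mathbb{C}:|w|<1,\ \mathrm{Im}(w)<0\}$, which is simple, precisely $1$ root in $\{w\in\mathbb{C}:|w|<1,\ \mathrm{Im}(w)>0\}$, which is simple, and $2$ different simple roots in $\mathbb{R}\setminus[-1,1]$. In particular, $q_{\alpha,\beta}$ has no roots on the unit circle $S^1$ or on $[-1,1]$. *)

From HB Require Import structures.
From mathcomp Require Import all_boot all_order all_algebra.
From mathcomp Require Export complex.
Set Implicit Arguments. Unset Strict Implicit. Unset Printing Implicit Defensive.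
Import Order.TTheory GRing.Theory Num.Theory.
Local Open Scope ring_scope.
Local Open Scope complex_scope.

Definition q_ab (R : rcfType) (a b : R) : {poly R[i]} :=
  'X^4 + (a%:C)%:P * 'X^3 + ((b - 4)%:C)%:P * 'X^2 - (a%:C)%:P * 'X + 3%:P.

Definition simple_root (R : rcfType) (p : {poly R[i]}) (w : R[i]) : Prop :=
  mup w p = 1%N.

From HB Require Import structures.
From mathcomp Require Import all_boot all_order all_algebra.
From mathcomp Require Import complex polyrcf ring lra.
Set Implicit Arguments. Unset Strict Implicit.
Import Order.TTheory GRing.Theory Num.Theory.
Local Open Scope ring_scope.
Local Open Scope complex_scope.

(* The four roots are located through a real factorisation
   q = (X - x1) (X - x2) (X^2 + c1 X + c0).  Writing
   q(x) = (1 - x^2) (3 - x^2 - a x) + b x^2 shows that q > 0 on [-1, 1].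
   For a < -2 (the case a > 2 is its mirror image under x |-> -x), sign
   changes of q on [1, 3/2] and on [3/y2, 5] give real roots y2 < y1 with
   y1 y2 > 3, so c0 = 3 / (y1 y2) < 1.  A monic quadratic that is positive on
   [-1, 1] and has constant term below 1 has its vertex in [-1, 1], hence a
   negative discriminant: its roots are a conjugate pair w, w^* with
   |w|^2 = c0 < 1.  The four roots are then pairwise distinct, so simple. *)

Definition q_real (R : nzRingType) (a b : R) : {poly R} :=
  'X^4 + a%:P * 'X^3 + (b - 4)%:P * 'X^2 - a%:P * 'X + 3%:P.

Definition quad_poly (R : nzRingType) (c1 c0 : R) : {poly R} :=
  'X^2 + c1%:P * 'X + c0%:P.

Lemma q_abE (R : rcfType) (a b : R) :
  q_ab a b = map_poly (real_complex R) (q_real a b).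
Proof.
rewrite /q_real !(rmorphB, rmorphD, rmorphM, rmorphXn) /= !map_polyC /=.
by rewrite map_polyX !rmorph1 /q_ab; ring.
Qed.

Lemma horner_q_real (R : comNzRingType) (a b x : R) :
  (q_real a b).[x] = x ^+ 4 + a * x ^+ 3 + (b - 4) * x ^+ 2 - a * x + 3.
Proof. by rewrite !hornerE. Qed.

Lemma horner_quad_poly (R : comNzRingType) (c1 c0 x : R) :
  (quad_poly c1 c0).[x] = x ^+ 2 + c1 * x + c0.
Proof. by rewrite !hornerE. Qed.

Lemma horner_q_realNN (R : comNzRingType) (a b x : R) :
  (q_real (- a) b).[- x] = (q_real a b).[x].
Proof. by rewrite !horner_q_real; ring. Qed.

(* The value of q at |x| = t in the worst case a x = 49/20 t, b = 1/25. *)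
Lemma q_real_worst_case_gt0 (R : realFieldType) (t : R) : 0 <= t <= 1 ->
  0 < (1 - t ^+ 2) * (3 - t ^+ 2 - 49 / 20 * t) + t ^+ 2 / 25.
Proof.
move=> /andP[t_ge0 t_le1].
have u_t2 : 0 <= (1 - t) * t ^+ 2 by rewrite mulr_ge0 ?sqr_ge0 ?subr_ge0.
have u_t : 0 <= (1 - t) * t by rewrite mulr_ge0 ?subr_ge0.
have u2_t : 0 <= (1 - t) ^+ 2 * t by rewrite mulr_ge0 ?sqr_ge0.
have u3 : 0 <= (1 - t) ^+ 3 by rewrite exprn_ge0 ?subr_ge0.
have u2_t2 : 0 <= (1 - t) ^+ 2 * t ^+ 2 by rewrite mulr_ge0 ?sqr_ge0.
nra.
Qed.

Lemma norm_lt_49_20 (R : realFieldType) (a : R) : a ^+ 2 < 6 -> `|a| < 49 / 20.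
Proof.
move=> a2_lt6; have : `|a| ^+ 2 < (49 / 20) ^+ 2 by rewrite real_normK ?num_real; lra.
by rewrite ltr_pXn2r // ?nnegrE //; lra.
Qed.

Lemma q_real_gt0 (R : realFieldType) (a b x : R) :
  a ^+ 2 < 6 -> 4 / 100 < b -> -1 <= x <= 1 -> 0 < (q_real a b).[x].
Proof.
rewrite -ler_norml => a2_lt6 b_gt x_le1.
have a_lt := norm_lt_49_20 a2_lt6.
have ax_le : a * x <= 49 / 20 * `|x|.
  by rewrite (le_trans (ler_norm _)) // normrM ler_wpM2r // ltW.
have x2E : x ^+ 2 = `|x| ^+ 2 by rewrite real_normK ?num_real.
have qE : (q_real a b).[x] = (1 - `|x| ^+ 2) * (3 - `|x| ^+ 2 - a * x) + b * `|x| ^+ 2.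
  by rewrite horner_q_real -x2E; ring.
have := @q_real_worst_case_gt0 _ `|x|; rewrite normr_ge0 x_le1 qE => /(_ isT).
have x2_le1 : 0 <= 1 - `|x| ^+ 2 by rewrite subr_ge0 expr_le1.
have : 0 <= `|x| ^+ 2 by rewrite sqr_ge0.
nra.
Qed.

(* x |-> 3 / x almost preserves q; this produces a root beyond 3 / y2. *)
Lemma horner_q_real_inv3 (R : fieldType) (a b y : R) : y != 0 ->
  y ^+ 4 * (q_real a b).[3 / y]
  = 9 * (q_real a b).[y] - 6 * (y ^+ 2 - 3) * (y ^+ 2 + 2 * a * y + 3).
Proof. by move=> y_neq0; rewrite !horner_q_real; field. Qed.

Lemma poly_ivt_neg_pos (R : rcfType) (p : {poly R}) (l r : R) : l <= r ->
  p.[l] < 0 -> 0 < p.[r] -> exists2 x, l < x < r & root p x.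
Proof.
move=> lr pl pr; have plr : p.[l] * p.[r] < 0 by rewrite nmulr_rlt0.
by have [x] := poly_ivtoo lr plr; rewrite in_itv /=; exists x.
Qed.

Lemma q_real_pos_roots (R : rcfType) (a b : R) :
  a < -2 -> a ^+ 2 < 6 -> 4 / 100 < b < 165 / 100 ->
  exists y1 y2 : R, [/\ 1 < y2, y2 < y1, 3 < y1 * y2,
    root (q_real a b) y1 & root (q_real a b) y2].
Proof.
move=> a_lt a2_lt6 /andP[b_gt b_lt].
have /ltr_normlP[Na_lt _] := norm_lt_49_20 a2_lt6.
have [y2 /andP[y2_gt1 y2_lt] y2_root] : exists2 y2, 1 < y2 < 3 / 2 & root (q_real a b) y2.
  have q1 : (- q_real a b).[1] < 0 by rewrite hornerN horner_q_real; lra.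
  have q32 : 0 < (- q_real a b).[3 / 2] by rewrite hornerN horner_q_real; lra.
  have [|y2 ? ?] := poly_ivt_neg_pos _ q1 q32; first lra.
  by exists y2; rewrite // -rootN.
have y2_gt0 : 0 < y2 by lra.
have z_gt2 : 2 < 3 / y2 by rewrite ltr_pdivlMr //; lra.
have z_lt3 : 3 / y2 < 3 by rewrite ltr_pdivrMr //; lra.
have qz_lt0 : (q_real a b).[3 / y2] < 0.
  have qzE := horner_q_real_inv3 a b (lt0r_neq0 y2_gt0).
  rewrite (rootP y2_root) mulr0 sub0r in qzE.
  have y2_sqr_lt3 : y2 ^+ 2 - 3 < 0.
    by rewrite subr_lt0 (lt_trans (_ : _ < (3 / 2) ^+ 2)) ?ltrXn2r //; lra.
  have y2_quad_lt0 : y2 ^+ 2 + 2 * a * y2 + 3 < 0.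
    have : 0 < (y2 - 1) * (3 - y2) by rewrite mulr_gt0 // subr_gt0; lra.
    have : (a + 2) * y2 < 0 by rewrite pmulr_llt0 //; lra.
    lra.
  rewrite -(pmulr_rlt0 _ (exprn_gt0 4 y2_gt0)) qzE oppr_lt0 -mulrA.
  by rewrite pmulr_rgt0 // nmulr_rgt0.
have q5 : 0 < (q_real a b).[5] by rewrite horner_q_real; lra.
have [|y1 /andP[y1_gt _] y1_root] := poly_ivt_neg_pos _ qz_lt0 q5; first lra.
exists y1, y2; split => //; first lra.
by rewrite -ltr_pdivrMr.
Qed.

Lemma q_real_two_roots (R : rcfType) (a b : R) :
  4 < a ^+ 2 < 6 -> 4 / 100 < b < 165 / 100 ->
  exists x1 x2 : R, [/\ x1 != x2, 1 < `|x1|, 1 < `|x2|, 3 < x1 * x2 &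
    root (q_real a b) x1 /\ root (q_real a b) x2].
Proof.
move=> /andP[a2_gt4 a2_lt6] b_bounds.
have [a_lt0 | a_ge0] := ltrP a 0.
  have [|y1 [y2 [y2_gt1 y21 y12 r1 r2]]] := q_real_pos_roots _ a2_lt6 b_bounds.
    by nra.
  exists y1, y2; split => //; first by rewrite gt_eqF.
  - by rewrite gtr0_norm; lra.
  - by rewrite gtr0_norm; lra.
have Na2_lt6 : (- a) ^+ 2 < 6 by rewrite sqrrN.
have [|y1 [y2 [y2_gt1 y21 y12 r1 r2]]] := q_real_pos_roots _ Na2_lt6 b_bounds.
  by nra.
exists (- y1), (- y2); split; rewrite ?eqr_opp ?normrN ?mulrNN //.
- by rewrite gt_eqF.
- by rewrite gtr0_norm; lra.
- by rewrite gtr0_norm; lra.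
- by split; rewrite /root -horner_q_realNN opprK.
Qed.

Lemma mul_subr_gt0_outside (R : realDomainType) (x y1 y2 : R) :
  `|x| <= 1 -> 1 < `|y1| -> 1 < `|y2| -> 0 < y1 * y2 -> 0 < (x - y1) * (x - y2).
Proof.
move=> /ler_normlP[Nx_le x_le]; rewrite !ltr_normr.
by move=> /orP[y1_gt1 | Ny1_gt1] /orP[y2_gt1 | Ny2_gt1] y12_gt0; nra.
Qed.

Lemma quad_poly_discr_lt0 (R : realFieldType) (c1 c0 : R) : c0 < 1 ->
  (forall x, -1 <= x <= 1 -> 0 < (quad_poly c1 c0).[x]) -> c1 ^+ 2 < 4 * c0.
Proof.
move=> c0_lt1 quad_gt0.
have pos x : -1 <= x <= 1 -> 0 < x ^+ 2 + c1 * x + c0.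
  by move=> /quad_gt0; rewrite horner_quad_poly.
have /pos q1 : -1 <= (1 : R) <= 1 by lra.
have /pos qN1 : -1 <= (-1 : R) <= 1 by lra.
have /pos q_vertex : -1 <= - c1 / 2 <= 1 by lra.
lra.
Qed.

Section QuarticFactor.
Variables (R : realFieldType) (a b x1 x2 : R).
Hypotheses (x12 : x1 != x2) (x1x2_gt3 : 3 < x1 * x2).
Hypotheses (root_x1 : root (q_real a b) x1) (root_x2 : root (q_real a b) x2).

Local Notation c0 := (3 / (x1 * x2)).
Local Notation c1 := (a + x1 + x2).

(* c1 and c0 match the coefficients of X^3 and X^0; the two roots force the
   two remaining coefficients d2 and d1 of the difference to vanish. *)
Lemma q_real_factor :
  q_real a b = ('X - x1%:P) * ('X - x2%:P) * quad_poly c1 c0.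
Proof.
have x1x2_neq0 : x1 * x2 != 0 by rewrite gt_eqF // (lt_trans _ x1x2_gt3).
have [x1_neq0 x2_neq0] : x1 != 0 /\ x2 != 0 by apply/norP; rewrite -mulf_eq0.
set c := c0; have c0E : x1 * x2 * c = 3 by rewrite mulrC divfK.
set d2 := b - 4 - (c - (x1 + x2) * c1 + x1 * x2).
set d1 := (x1 + x2) * c - x1 * x2 * c1 - a.
have defect_at x : (q_real a b).[x] - (x - x1) * (x - x2) * (quad_poly c1 c).[x]
    = (d2 * x + d1) * x.
  by rewrite horner_q_real horner_quad_poly /d2 /d1 -c0E; ring.
have d_root x : x != 0 -> root (q_real a b) x -> x = x1 \/ x = x2 -> d2 * x + d1 = 0.
  move=> x_neq0 /rootP qx0 x_eq; apply/eqP.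
  have vanish : (x - x1) * (x - x2) = 0.
    by case: x_eq => ->; rewrite subrr ?mulr0 ?mul0r.
  have := defect_at x; rewrite qx0 vanish !mul0r subr0 => /esym/eqP.
  by rewrite mulf_eq0 (negPf x_neq0) orbF.
have d_x1 := d_root x1 x1_neq0 root_x1 (or_introl erefl).
have d_x2 := d_root x2 x2_neq0 root_x2 (or_intror erefl).
have d2_eq0 : d2 = 0.
  have : d2 * (x1 - x2) = (d2 * x1 + d1) - (d2 * x2 + d1) by ring.
  rewrite d_x1 d_x2 subrr => /eqP; rewrite mulf_eq0 [x1 - x2 == 0]subr_eq0 (negPf x12) orbF.
  by move/eqP.
have d1_eq0 : d1 = 0 by rewrite -d_x1 d2_eq0 mul0r add0r.
have defect : q_real a b - ('X - x1%:P) * ('X - x2%:P) * quad_poly c1 c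
    = (d2%:P * 'X + d1%:P) * 'X.
  by rewrite /q_real /quad_poly /d2 /d1 -c0E; ring.
by apply/eqP; rewrite -subr_eq0 defect d2_eq0 d1_eq0 !(polyC0, mul0r, add0r).
Qed.

Hypotheses (a2_lt6 : a ^+ 2 < 6) (b_gt : 4 / 100 < b).
Hypotheses (x1_gt1 : 1 < `|x1|) (x2_gt1 : 1 < `|x2|).

Lemma quad_factor_discr_lt0 : c1 ^+ 2 < 4 * c0.
Proof.
have x1x2_gt0 : 0 < x1 * x2 by rewrite (lt_trans _ x1x2_gt3).
apply: quad_poly_discr_lt0 => [|x x_in]; first by rewrite ltr_pdivrMr ?mul1r.
have := q_real_gt0 a2_lt6 b_gt x_in.
rewrite q_real_factor !hornerM !hornerXsubC pmulr_rgt0 //.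
by apply: mul_subr_gt0_outside; rewrite ?ler_norml.
Qed.

End QuarticFactor.

Lemma quad_poly_conj_roots (R : rcfType) (c1 c0 : R) : c1 ^+ 2 < 4 * c0 ->
  exists w : R[i], [/\ 0 < complex.Im w, `|w| ^+ 2 = c0%:C &
    map_poly (real_complex R) (quad_poly c1 c0) = ('X - w%:P) * ('X - w^*%:P)].
Proof.
move=> discr_lt0.
pose s := Num.sqrt (c0 - c1 ^+ 2 / 4).
have s_gt0 : 0 < s by rewrite sqrtr_gt0; lra.
have s2 : s ^+ 2 = c0 - c1 ^+ 2 / 4 by rewrite sqr_sqrtr //; lra.
pose w := (- c1 / 2) +i* s.
have normw : `|w| ^+ 2 = c0%:C by rewrite -add_Re2_Im2 /= s2; congr (_%:C); field.
exists w; split => //.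
have sumE : c1%:C = - (w + w^*).
  by rewrite -complexr0; simpc; congr (_ +i* _); field.
have prodE : c0%:C = w * w^* by rewrite -normCK.
rewrite /quad_poly !(rmorphD, rmorphM, rmorphXn) /= !map_polyC /= map_polyX.
rewrite sumE prodE !(rmorphD, rmorphN, rmorphM); ring.
Qed.

Lemma Im_conjc (R : pzRingType) (z : R[i]) : complex.Im z^* = - complex.Im z.
Proof. by case: z. Qed.

Lemma norm_real_complex (R : rcfType) (x : R) : `|x%:C| = `|x|%:C.
Proof. by rewrite normc_def /= expr0n addr0 sqrtr_sqr. Qed.

Section SplitQuartic.
Variables (R : rcfType) (q : {poly R[i]}) (x1 x2 : R) (w : R[i]).
Local Notation zs := [:: x1%:C; x2%:C; w; w^*].
Hypotheses (qE : q = \prod_(z <- zs) ('X - z%:P)) (x12 : x1 != x2).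
Hypotheses (x1_gt1 : 1 < `|x1|) (x2_gt1 : 1 < `|x2|).
Hypotheses (Imw_gt0 : 0 < complex.Im w) (w_lt1 : `|w| < 1).

Lemma split_rootE z : root q z = (z \in zs).
Proof. by rewrite qE root_prod_XsubC. Qed.

Lemma split_roots_uniq : uniq zs.
Proof.
have Im_neq (z z' : R[i]) : complex.Im z != complex.Im z' -> z != z'.
  by apply: contra => /eqP ->.
rewrite /= !inE !negb_or (inj_eq (@complexI R)) x12 !Im_neq //= ?Im_conjc.
by rewrite -addr_eq0 gt_eqF ?addr_gt0.
all: by rewrite eq_sym ?oppr_eq0 gt_eqF.
Qed.

Lemma split_root_simple z : root q z -> simple_root q z.
Proof.
rewrite split_rootE /simple_root qE mu_prod_XsubC => z_in.
by rewrite count_uniq_mem ?split_roots_uniq ?z_in.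
Qed.

Lemma split_rootP z : root q z -> [\/ z = x1%:C, z = x2%:C, z = w | z = w^*].
Proof.
rewrite split_rootE !inE => /or4P[] /eqP ->;
  by [constructor 1 | constructor 2 | constructor 3 | constructor 4].
Qed.

Lemma split_real_rootP x : root q x%:C -> x = x1 \/ x = x2.
Proof.
move=> /split_rootP[] x_eq; [left | right | exfalso | exfalso].
- exact: complexI.
- exact: complexI.
- by move: Imw_gt0; rewrite -x_eq /= ltxx.
- by move: Imw_gt0; rewrite -oppr_lt0 -Im_conjc -x_eq /= ltxx.
Qed.

Lemma split_quartic_lower_root :
  exists w' : R[i], [/\ root q w', `|w'| < 1, complex.Im w' < 0, simple_root q w' &
    forall z : R[i], root q z -> `|z| < 1 -> complex.Im z < 0 -> z = w'].
Proof.
have root_w' : root q w^* by rewrite split_rootE !inE eqxx !orbT.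
exists w^*; split => //.
- by rewrite norm_conjC.
- by rewrite Im_conjc oppr_lt0.
- exact: split_root_simple.
by move=> z /split_rootP[] -> // _ /=; rewrite ?ltxx // => /(lt_trans Imw_gt0); rewrite ltxx.
Qed.

Lemma split_quartic_upper_root :
  exists w' : R[i], [/\ root q w', `|w'| < 1, complex.Im w' > 0, simple_root q w' &
    forall z : R[i], root q z -> `|z| < 1 -> complex.Im z > 0 -> z = w'].
Proof.
have root_w : root q w by rewrite split_rootE !inE eqxx !orbT.
exists w; split => //; first exact: split_root_simple.
move=> z /split_rootP[] -> // _ /=; rewrite ?ltxx // Im_conjc oppr_gt0.
by move=> /(lt_trans Imw_gt0); rewrite ltxx.
Qed.

Lemma split_quartic_real_roots :
  exists y1 y2 : R, [/\ y1 != y2, 1 < `|y1| /\ 1 < `|y2|,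
    root q (y1%:C) /\ simple_root q (y1%:C),
    root q (y2%:C) /\ simple_root q (y2%:C) &
    forall x : R, 1 < `|x| -> root q (x%:C) -> x = y1 \/ x = y2].
Proof.
have root_x1 : root q x1%:C by rewrite split_rootE !inE eqxx.
have root_x2 : root q x2%:C by rewrite split_rootE !inE eqxx !orbT.
exists x1, x2; split => //; try by split; last exact: split_root_simple.
by move=> x _; apply: split_real_rootP.
Qed.

Lemma split_quartic_norm_neq1 z : root q z -> `|z| != 1.
Proof.
case/split_rootP => ->; rewrite ?norm_real_complex ?norm_conjC.
- by rewrite gt_eqF // ltcR.
- by rewrite gt_eqF // ltcR.
- by rewrite lt_eqF.
- by rewrite lt_eqF.
Qed.

Lemma split_quartic_unit_interval x : -1 <= x <= 1 -> ~~ root q x%:C.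
Proof.
rewrite -ler_norml => x_le1; apply/negP => /split_real_rootP[] x_eq.
- by move: x1_gt1; rewrite -x_eq ltNge x_le1.
- by move: x2_gt1; rewrite -x_eq ltNge x_le1.
Qed.
End SplitQuartic.

Theorem mainTheorem4 (R : rcfType) (a b : R)
  (ha : 4 < a ^+ 2 < 6) (hb : 4 / 100 < b < 165 / 100) :
  let q := q_ab a b in
  (exists w : R[i], [/\ root q w, `|w| < 1, complex.Im w < 0, simple_root q w &
      forall z : R[i], root q z -> `|z| < 1 -> complex.Im z < 0 -> z = w]) /\
  (exists w : R[i], [/\ root q w, `|w| < 1, complex.Im w > 0, simple_root q w &
      forall z : R[i], root q z -> `|z| < 1 -> complex.Im z > 0 -> z = w]) /\
  (exists x1 x2 : R, [/\ x1 != x2, 1 < `|x1| /\ 1 < `|x2|,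
      root q (x1%:C) /\ simple_root q (x1%:C),
      root q (x2%:C) /\ simple_root q (x2%:C) &
      forall x : R, 1 < `|x| -> root q (x%:C) -> x = x1 \/ x = x2]) /\
  (forall w : R[i], root q w -> `|w| != 1) /\
  (forall x : R, -1 <= x <= 1 -> ~~ root q (x%:C)).
Proof.
move=> q; have /andP[_ a2_lt6] := ha; have /andP[b_gt _] := hb.
have [x1 [x2 [x12 x1_gt1 x2_gt1 x1x2_gt3 [root1 root2]]]] := q_real_two_roots ha hb.
have := quad_factor_discr_lt0 x12 x1x2_gt3 root1 root2 a2_lt6 b_gt x1_gt1 x2_gt1.
case/quad_poly_conj_roots => w [Imw_gt0 normw2 quadE].
have w_lt1 : `|w| < 1.
  rewrite -(expr_lt1 (n := 2)) // normw2 ltcR ltr_pdivrMr ?mul1r //.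
  exact: lt_trans x1x2_gt3.
have qE : q = \prod_(z <- [:: x1%:C; x2%:C; w; w^*]) ('X - z%:P).
  rewrite /q q_abE (q_real_factor x12 x1x2_gt3 root1 root2) !rmorphM /= quadE.
  by rewrite !map_polyXsubC !big_cons big_nil mulr1 !mulrA.
split; first exact: split_quartic_lower_root qE x12 Imw_gt0 w_lt1.
split; first exact: split_quartic_upper_root qE x12 Imw_gt0 w_lt1.
split; first exact: split_quartic_real_roots qE x12 x1_gt1 x2_gt1 Imw_gt0.
split; first exact: split_quartic_norm_neq1 qE x1_gt1 x2_gt1 w_lt1.
exact: split_quartic_unit_interval qE x1_gt1 x2_gt1 Imw_gt0.
Qed.
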